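(* Let $M$ be a $3$-connected matroid, let $\mathcal{T}$ be a tangle of $M$, and let $X,X'$ be long lines of the tangle matroid $M(\mathcal{T})$ such that $\rank_{\mathcal{T}}(X\cup X')=4$. Let $e\in X$ and $M'\in\{M\setminus e, M/e\}$ be such that $M'$ is $3$-connected, and let $\mathcal{T}'$ be the tangle of $M'$ inherited from $\mathcal{T}$. Then $X'$ is closed in the tangle matroid $M'(\mathcal{T}')$.
   Context: $\lambda_M(X) = \rank_M(X) + \rank_M(E(M)\setminus X) - \rank(M)$. A tangle of order $\theta$ of $M$ is a collection $\mathcal{T}$ of subsets of $E(M)$ such that: (i) $\lambda_M(X)<\theta$ for all $X\in\mathcal{T}$; (ii) for every $X\subseteq E(M)$ with $\lambda_M(X)<\theta$, either $X\in\mathcal{T}$ or $E(M)\setminus X\in\mathcal{T}$; (iii) if $X,Y,Z\in\mathcal{T}$ then $X\cup Y\cup Z\neq E(M)$; (iv) $E(M)\setminus\{e\}\notin\mathcal{T}$ for every $e\in E(M)$. The tangle matroid $M(\mathcal{T})$ has rank function $\rank_{\mathcal{T}}(X) = \min\{\lambda_M(Y): X\subseteq Y\in\mathcal{T}\}$ if some member of $\mathcal{T}$ contains $X$, and $\theta$ otherwise. A long line is a closed set of rank $2$ with at least $3$ elements. For a minor $N$ of $M$ with $S=E(M)\setminus E(N)$, the tangle of $N$ inherited from $\mathcal{T}$ is $\{X\setminus S: X\in\mathcal{T},\ \lambda_N(X\setminus S)<\theta-|S|\}$, a tangle of $N$ of order $\theta-|S|$. *)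

From mathcomp Require Import all_boot.
Set Implicit Arguments. Unset Strict Implicit. Unset Printing Implicit Defensive.

Section Matroids.
Variable T : finType.

Definition is_matroid (E : {set T}) (r : {set T} -> nat) : Prop :=
  [/\ (forall X : {set T}, X \subset E -> r X <= #|X|),
      (forall X Y : {set T}, X \subset Y -> Y \subset E -> r X <= r Y) &
      (forall X Y : {set T}, X \subset E -> Y \subset E ->
         r (X :|: Y) + r (X :&: Y) <= r X + r Y)].

Definition conn (E : {set T}) (r : {set T} -> nat) (X : {set T}) : nat :=
  r X + r (E :\: X) - r E.

Definition three_connected (E : {set T}) (r : {set T} -> nat) : Prop :=
  forall (X : {set T}) (k : nat), X \subset E -> 1 <= k < 3 ->
    k <= #|X| -> k <= #|E :\: X| -> k <= conn E r X.

Definition is_tangle (E : {set T}) (r : {set T} -> nat) (theta : nat)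
  (Tg : {set {set T}}) : Prop :=
  [/\ (forall X : {set T}, X \in Tg -> X \subset E),
      (forall X : {set T}, X \in Tg -> conn E r X < theta),
      (forall X : {set T}, X \subset E -> conn E r X < theta -> X \in Tg \/ (E :\: X) \in Tg),
      (forall X Y Z : {set T}, X \in Tg -> Y \in Tg -> Z \in Tg -> X :|: Y :|: Z <> E) &
      (forall e : T, e \in E -> (E :\ e) \notin Tg)].

Definition tangle_rank (E : {set T}) (r : {set T} -> nat) (theta : nat)
  (Tg : {set {set T}}) (X : {set T}) : nat :=
  if [exists Y in Tg, X \subset Y]
  then \big[minn/theta]_(Y in Tg | X \subset Y) conn E r Y
  else theta.

Definition mat_closed (E : {set T}) (rk : {set T} -> nat) (X : {set T}) : Prop :=
  forall f : T, f \in E -> f \notin X -> rk X < rk (f |: X).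

Definition long_line (E : {set T}) (rk : {set T} -> nat) (X : {set T}) : Prop :=
  [/\ X \subset E, mat_closed E rk X, rk X = 2 & 3 <= #|X|].

(* rank function of M \ e (del = true) or M / e (del = false);
   the ground set of either minor is E :\ e *)
Definition minor_rank (r : {set T} -> nat) (e : T) (del : bool) :
  {set T} -> nat :=
  fun X => if del then r X else r (e |: X) - r [set e].

Definition inherited_tangle (E : {set T}) (r : {set T} -> nat) (e : T)
  (del : bool) (theta : nat) (Tg : {set {set T}}) : {set {set T}} :=
  [set X :\ e | X in Tg & conn (E :\ e) (minor_rank r e del) (X :\ e) < theta - 1].

End Matroids.

From mathcomp Require Import all_boot zify.
Set Implicit Arguments. Unset Strict Implicit. Unset Printing Implicit Defensive.

(* Since r_T(X) = 2, X lies in a tangle member Z with lambda(Z) = 2, and since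
   r_T(X u X') = 4, submodularity gives lambda(Y n Z) + 2 <= lambda(Y) for every
   tangle member Y containing X'; with 3-connectivity this makes such Y of
   connectivity at most 3 meet Z in at most one element.  If some f were in the
   closure of X' in M'(T'), there would be a tangle member Y with
   f u X' <= A = Y - e and lambda'(A) <= 2.  As X' is closed in M(T),
   lambda(A) >= 3, so removing e lowers the connectivity of A; then e u A is a
   tangle member of connectivity <= 3 containing X', so A misses Z.  But removing
   e cannot lower lambda(A) without also lowering lambda(Z) for the set Z, which
   contains e and misses A; this contradicts the 3-connectivity of M' at Z - e. *)

(* Decides set identities and inclusions pointwise: every inclusion hypothesis is
   instantiated at a generic point, then all memberships are split on. *)
Ltac set_solve :=
  let x := fresh "x" in
  first [ by []
        | (apply/setP => x || apply/subsetP => x);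
          repeat match goal with
          | H : is_true (?A \subset ?B) |- _ =>
              lazymatch goal with
              | |- context [(x \in A) ==> (x \in B)] => fail
              | _ => move/subsetP: (H) => /(_ x) /implyP
              end
          end;
          rewrite ?inE;
          repeat match goal with |- context [?a == ?b] => case: (eqVneq a b) => [->|_] end;
          repeat match goal with
          | H : is_true (?a \in ?A) |- context [?a \in ?A] => rewrite H
          | H : is_true (~~ (?a \in ?A)) |- context [?a \in ?A] => rewrite (negbTE H)
          end;
          repeat case: (_ \in _); by move=> /= * ].

Section Matroid.
Variables (T : finType) (E : {set T}) (r : {set T} -> nat).
Hypothesis hM : is_matroid E r.
Implicit Types (X Y U I A B S Z : {set T}).

Lemma rank_card X : X \subset E -> r X <= #|X|.
Proof. by case: hM => H _ _; apply: H. Qed.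

Lemma rank_mono X Y : X \subset Y -> Y \subset E -> r X <= r Y.
Proof. by case: hM => _ H _; apply: H. Qed.

Lemma rank_submod X Y : X \subset E -> Y \subset E ->
  r (X :|: Y) + r (X :&: Y) <= r X + r Y.
Proof. by case: hM => _ _ H; apply: H. Qed.

Lemma rank_submod_eq X Y U I : X \subset E -> Y \subset E ->
  X :|: Y = U -> X :&: Y = I -> r U + r I <= r X + r Y.
Proof. by move=> hX hY <- <-; apply: rank_submod. Qed.

Lemma rank_le_compl X : X \subset E -> r E <= r X + r (E :\: X).
Proof.
move=> hX; have : r E + r set0 <= r X + r (E :\: X) by apply: rank_submod_eq; set_solve.
lia.
Qed.

Lemma conn_submod A B : A \subset E -> B \subset E ->
  conn E r (A :|: B) + conn E r (A :&: B) <= conn E r A + conn E r B.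
Proof.
move=> hA hB; rewrite /conn.
have hU : A :|: B \subset E by rewrite subUset hA.
have hI : A :&: B \subset E by apply: subset_trans (subsetIl _ _) hA.
have := rank_le_compl hU; have := rank_le_compl hI; have := rank_submod hA hB.
have : r (E :\: (A :&: B)) + r (E :\: (A :|: B)) <= r (E :\: A) + r (E :\: B).
  by apply: rank_submod_eq; set_solve.
lia.
Qed.

Lemma rank_set1_le1 e : e \in E -> r [set e] <= 1.
Proof. by move=> he; rewrite -(cards1 e); apply: rank_card; rewrite sub1set. Qed.

Lemma rank_setU1 e S : e \in E -> S \subset E -> r (e |: S) <= r S + r [set e].
Proof.
move=> he hS; have := @rank_submod [set e] S; rewrite sub1set he => /(_ isT hS).
lia.
Qed.

Section Minor.
Variable e : T.
Hypothesis he : e \in E.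
Local Notation conn' del := (conn (E :\ e) (minor_rank r e del)).

Lemma conn_contractE S : S \subset E :\ e ->
  conn' false S = r (e |: S) + r (E :\: S) - r E - r [set e].
Proof.
move=> hS; rewrite /conn /minor_rank setD1K //.
have -> : e |: (E :\ e :\: S) = E :\: S by set_solve.
have : r [set e] <= r (e |: S) by apply: rank_mono; set_solve.
have : r [set e] <= r (E :\: S) by apply: rank_mono; set_solve.
have : r [set e] <= r E by apply: rank_mono; set_solve.
lia.
Qed.

Lemma conn_minor_le del S : S \subset E :\ e -> conn' del S <= conn E r S.
Proof.
move=> hS; case: del; last rewrite conn_contractE // /conn.
  have : r E + r (E :\ e :\: S) <= r (E :\: S) + r (E :\ e).
    by apply: rank_submod_eq; set_solve.
  rewrite /conn /minor_rank /=; lia.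
have : r (e |: S) <= r S + r [set e] by apply: rank_setU1; set_solve.
lia.
Qed.

Lemma conn_minor_le_setU1 del S : S \subset E :\ e -> conn' del S <= conn E r (e |: S).
Proof.
move=> hS; case: del; last rewrite conn_contractE //; rewrite /conn -setDDl /minor_rank /=.
  have : r E + r S <= r (e |: S) + r (E :\ e) by apply: rank_submod_eq; set_solve.
  lia.
have : r (E :\: S) <= r (E :\ e :\: S) + r [set e].
  by rewrite (_ : E :\: S = e |: (E :\ e :\: S)); [apply: rank_setU1 | ]; set_solve.
lia.
Qed.

Lemma conn_setU1_le_minor del S : S \subset E :\ e -> conn E r (e |: S) <= conn' del S + 1.
Proof.
move=> hS; have := rank_set1_le1 he.
case: del; last rewrite conn_contractE //; rewrite /conn -setDDl /minor_rank /=.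
  have : r (e |: S) <= r S + r [set e] by apply: rank_setU1; set_solve.
  have : r (E :\ e) <= r E by apply: rank_mono; set_solve.
  have : r (E :\ e) + r set0 <= r S + r (E :\ e :\: S) by apply: rank_submod_eq; set_solve.
  lia.
have : r (E :\ e :\: S) <= r (E :\: S) by apply: rank_mono; set_solve.
have : r E + r [set e] <= r (e |: S) + r (E :\: S) by apply: rank_submod_eq; set_solve.
lia.
Qed.

Lemma conn_minor_setD1_le del Y : Y \subset E -> conn' del (Y :\ e) <= conn E r Y.
Proof.
move=> hY; have hYe : Y :\ e \subset E :\ e by rewrite setSD.
case: (boolP (e \in Y)) => heY.
  by rewrite -{2}(setD1K heY); apply: conn_minor_le_setU1.
by rewrite -{2}(_ : Y :\ e = Y); [apply: conn_minor_le | set_solve].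
Qed.

Lemma conn_minor_drop del A Z : e \in Z -> Z \subset E -> A \subset E :\: Z ->
  conn' del A < conn E r A -> conn' del (Z :\ e) < conn E r Z.
Proof.
move=> heZ hZ hAZ; have hA : A \subset E :\ e by set_solve.
have hAE : A \subset E by set_solve.
have hZe : Z :\ e \subset E :\ e by set_solve.
have := rank_le_compl hAE; have := rank_le_compl hZ.
case: del; last rewrite !conn_contractE ?setD1K //; rewrite /conn /minor_rank /=.
  have -> : E :\ e :\: (Z :\ e) = E :\: Z by set_solve.
  have : r (E :\: A) + r (Z :\ e) <= r (E :\ e :\: A) + r Z by apply: rank_submod_eq; set_solve.
  have : r (E :\ e) + r set0 <= r (Z :\ e) + r (E :\: Z) by apply: rank_submod_eq; set_solve.
  have : r (E :\ e) + r set0 <= r A + r (E :\ e :\: A) by apply: rank_submod_eq; set_solve.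
  lia.
have : r (E :\: (Z :\ e)) + r A <= r (e |: A) + r (E :\: Z) by apply: rank_submod_eq; set_solve.
have : r E + r [set e] <= r Z + r (E :\: (Z :\ e)) by apply: rank_submod_eq; set_solve.
have : r E + r [set e] <= r (e |: A) + r (E :\: A) by apply: rank_submod_eq; set_solve.
lia.
Qed.

End Minor.

End Matroid.

Lemma big_minn_le (I : eqType) (s : seq I) (P : pred I) (F : I -> nat) t i :
  i \in s -> P i -> \big[minn/t]_(j <- s | P j) F j <= F i.
Proof.
elim: s => // x s IH; rewrite inE big_cons => /orP [/eqP <- -> | hi hP].
  exact: geq_minl.
by case: (P x); [apply: leq_trans (geq_minr _ _) (IH hi hP) | apply: IH].
Qed.

Section TangleRank.
Variables (T : finType) (E : {set T}) (r : {set T} -> nat) (theta : nat).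
Variable Tg : {set {set T}}.
Local Notation rT := (tangle_rank E r theta Tg).
Implicit Types S Y : {set T}.

Lemma tangle_rank_le_order S : rT S <= theta.
Proof.
rewrite /tangle_rank; case: ifP => // _.
by apply: (big_rec (fun x => x <= theta)) => // i x _ hx; rewrite geq_min hx orbT.
Qed.

Lemma tangle_rank_le_conn S Y : Y \in Tg -> S \subset Y -> rT S <= conn E r Y.
Proof.
move=> hY hSY; rewrite /tangle_rank.
have -> : [exists Y0 in Tg, S \subset Y0] by apply/existsP; exists Y; rewrite hY hSY.
by apply: big_minn_le; [rewrite mem_index_enum | rewrite hY hSY].
Qed.

Lemma tangle_rank_attained S : rT S < theta ->
  exists Y, [/\ Y \in Tg, S \subset Y & conn E r Y = rT S].
Proof.
rewrite /tangle_rank; case: ifP => _; last by rewrite ltnn.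
set P := fun b => b = theta \/ exists Y, [/\ Y \in Tg, S \subset Y & conn E r Y = b].
suff [->|//] : P (\big[minn/theta]_(Y in Tg | S \subset Y) conn E r Y) by rewrite ltnn.
apply: big_ind => [|x y hx hy|Y /andP [hY hSY]]; first by left.
  by rewrite /minn; case: ifP.
by right; exists Y.
Qed.

End TangleRank.

Arguments tangle_rank_le_order {T E r theta Tg S}.
Arguments tangle_rank_le_conn {T E r theta Tg S Y}.
Arguments tangle_rank_attained {T E r theta Tg S}.

Section Tangle.
Variables (T : finType) (E : {set T}) (r : {set T} -> nat) (theta : nat).
Variable Tg : {set {set T}}.
Hypothesis hT : is_tangle E r theta Tg.
Implicit Types S Y W : {set T}.

Lemma tangle_sub Y : Y \in Tg -> Y \subset E.
Proof. by case: hT => H _ _ _ _; apply: H. Qed.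

Lemma tangle_cover W Y1 Y2 : W \subset E -> conn E r W < theta ->
  Y1 \in Tg -> Y2 \in Tg -> W \subset Y1 :|: Y2 -> W \in Tg.
Proof.
move=> hW hc h1 h2 hWY; case: hT => _ _ hTor hT3 _.
case: (hTor W hW hc) => // hC; exfalso; apply: (hT3 _ _ _ h1 h2 hC).
have s1 := tangle_sub h1; have s2 := tangle_sub h2; set_solve.
Qed.

Lemma tangle_rank_le_connU S Y1 Y2 : Y1 \in Tg -> Y2 \in Tg -> S \subset Y1 :|: Y2 ->
  tangle_rank E r theta Tg S <= conn E r (Y1 :|: Y2).
Proof.
move=> h1 h2 hS; case: (leqP theta (conn E r (Y1 :|: Y2))) => hc.
  exact: leq_trans tangle_rank_le_order hc.
apply: tangle_rank_le_conn hS; apply: (tangle_cover _ hc h1 h2) => //.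
by rewrite subUset !tangle_sub.
Qed.

Lemma tangle_compl_card Z : Z \in Tg -> 2 <= #|E :\: Z|.
Proof.
move=> hZ; case: hT => _ _ _ hT3 hT4.
have hZE : E :\: (E :\: Z) = Z by rewrite setDDr setDv set0U (setIidPr (tangle_sub hZ)).
rewrite ltnNge; apply/negP; rewrite leq_eqVlt ltnS leqn0 cards_eq0.
case/orP => [/cards1P [x hx] | /eqP hx]; rewrite hx ?setD0 in hZE.
  have : x \in E :\: Z by rewrite hx set11.
  rewrite inE => /andP [_ /hT4].
  by rewrite hZE hZ.
by move: hZ; rewrite -hZE => hE; apply: (hT3 E E E hE hE hE); rewrite !setUid.
Qed.

End Tangle.

Lemma three_connected_card_lt (T : finType) (E W : {set T}) (r : {set T} -> nat) k :
  three_connected E r -> W \subset E -> k < 3 -> k <= #|E :\: W| ->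
  conn E r W < k -> #|W| < k.
Proof.
move=> h3 hW hk3 hkW hc; rewrite ltnNge; apply/negP => hkc.
case: k hk3 hkW hc hkc => // k hk3 hkW hc hkc.
by have := h3 W k.+1 hW hk3 hkc hkW; rewrite leqNgt hc.
Qed.

Lemma mem_inherited_tangle (T : finType) (E : {set T}) (r : {set T} -> nat) e del theta
    (Tg : {set {set T}}) Y :
  is_matroid E r -> e \in E -> Y \in Tg -> Y \subset E -> conn E r Y < theta - 1 ->
  Y :\ e \in inherited_tangle E r e del theta Tg.
Proof.
move=> hM he hY sY hc; apply/imsetP; exists Y => //; rewrite inE hY /=.
exact: leq_ltn_trans (conn_minor_setD1_le hM he del sY) hc.
Qed.

Section LongLines.
Variables (T : finType) (E : {set T}) (r : {set T} -> nat) (theta : nat).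
Variable Tg : {set {set T}}.
Hypotheses (hM : is_matroid E r) (h3 : three_connected E r) (hT : is_tangle E r theta Tg).
Local Notation rT := (tangle_rank E r theta Tg).

Lemma long_line_conn2 X : long_line E rT X -> 2 < theta ->
  exists Z, [/\ Z \in Tg, X \subset Z & conn E r Z = 2].
Proof. by case=> _ _ rX _ h2; rewrite -rX; apply: tangle_rank_attained; rewrite rX. Qed.

Variables X X' Z : {set T}.
Hypotheses (hX' : long_line E rT X') (hXX' : rT (X :|: X') = 4).
Hypotheses (hZ : Z \in Tg) (hXZ : X \subset Z) (lZ : conn E r Z = 2).

Lemma order_gt3 : 3 < theta.
Proof. by rewrite -hXX'; apply: tangle_rank_le_order. Qed.

Lemma minor_order_gt2 : 2 < theta - 1.
Proof. by rewrite ltn_subRL order_gt3. Qed.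

Lemma conn_meet_long_line Y : Y \in Tg -> X' \subset Y ->
  conn E r (Y :&: Z) + 2 <= conn E r Y.
Proof.
move=> hY hX'Y.
have h4 : 4 <= conn E r (Y :|: Z).
  by rewrite -hXX'; apply: tangle_rank_le_connU; rewrite // setUC setUSS.
have := conn_submod hM (tangle_sub hT hY) (tangle_sub hT hZ); rewrite lZ.
lia.
Qed.

Lemma card_meet_long_line Y : Y \in Tg -> X' \subset Y -> conn E r Y <= 3 ->
  #|Y :&: Z| + 2 <= conn E r Y.
Proof.
move=> hY hX'Y hY3; have hc := conn_meet_long_line hY hX'Y.
have sYZ : Y :&: Z \subset E by apply: subset_trans (subsetIr _ _) (tangle_sub hT hZ).
have hk3 : conn E r Y - 1 < 3 by lia.
have hcard : conn E r Y - 1 <= #|E :\: (Y :&: Z)|.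
  have : #|E :\: Z| <= #|E :\: (Y :&: Z)| by apply/subset_leq_card/setDS/subsetIr.
  have := tangle_compl_card hT hZ; lia.
have := three_connected_card_lt h3 sYZ hk3 hcard; lia.
Qed.

Variables (e : T) (del : bool).
Hypotheses (hX : long_line E rT X) (heX : e \in X).
Hypothesis h3' : three_connected (E :\ e) (minor_rank r e del).
Local Notation conn' := (conn (E :\ e) (minor_rank r e del)).
Local Notation rT' := (tangle_rank (E :\ e) (minor_rank r e del) (theta - 1)
                        (inherited_tangle E r e del theta Tg)).

Let sZ : Z \subset E. Proof. exact: (tangle_sub hT hZ). Qed.
Let heZ : e \in Z. Proof. exact: subsetP hXZ e heX. Qed.
Let heE : e \in E. Proof. exact: subsetP sZ e heZ. Qed.

Lemma notin_long_line : e \notin X'.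
Proof.
apply/negP => heX'.
have [Y0 [hY0 hX'Y0 lY0]] := long_line_conn2 hX' (ltnW order_gt3).
have := card_meet_long_line hY0 hX'Y0; rewrite lY0 => /(_ isT).
rewrite -[X in _ <= X]add0n leq_add2r leqn0 cards_eq0 => /eqP/setP/(_ e).
by rewrite !inE heZ (subsetP hX'Y0 _ heX').
Qed.

Lemma conn_le_minor : conn E r Z <= conn' (Z :\ e).
Proof.
rewrite lZ; apply: h3' => //; first exact: setSD.
  case: hX => _ _ _; rewrite (cardsD1 e X) heX add1n ltnS => hXe.
  exact: leq_trans hXe (subset_leq_card (setSD _ hXZ)).
by rewrite (_ : E :\ e :\: (Z :\ e) = E :\: Z) ?(tangle_compl_card hT hZ) //; set_solve.
Qed.

Lemma minor_tangle_rank_le2 : rT' X' <= 2.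
Proof.
have [Y0 [hY0 hX'Y0 lY0]] := long_line_conn2 hX' (ltnW order_gt3).
have sY0 := tangle_sub hT hY0.
have hY0' : Y0 :\ e \in inherited_tangle E r e del theta Tg.
  by apply: mem_inherited_tangle; rewrite // lY0 minor_order_gt2.
have hX'Y0e : X' \subset Y0 :\ e by rewrite subsetD1 hX'Y0 notin_long_line.
apply: leq_trans (tangle_rank_le_conn hY0' hX'Y0e) _.
by rewrite -lY0; apply: conn_minor_setD1_le.
Qed.

Lemma conn_setD1_gt2 f Y : f \notin X' -> Y \in Tg -> f |: X' \subset Y :\ e ->
  2 < conn E r (Y :\ e).
Proof.
move=> hfX' hY hfY; have sY := tangle_sub hT hY.
have sYe : Y :\ e \subset E by set_solve.
have hfE : f \in E by apply: (subsetP sYe); apply: (subsetP hfY); rewrite setU11.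
have rf : 2 < rT (f |: X') by case: hX' => _ hcl <- _; apply: hcl.
rewrite ltnNge; apply/negP => hc.
have hYe : Y :\ e \in Tg.
  apply: (tangle_cover hT sYe _ hY hY); last by rewrite setUid subsetDl.
  exact: leq_ltn_trans hc (ltnW order_gt3).
by move: (leq_trans rf (tangle_rank_le_conn hYe hfY)); rewrite ltnNge hc.
Qed.

Lemma minor_conn_setD1_gt2 f Y : f \notin X' -> Y \in Tg -> f |: X' \subset Y :\ e ->
  2 < conn' (Y :\ e).
Proof.
move=> hfX' hY hfY; set A := Y :\ e in hfY *.
have sY := tangle_sub hT hY.
have hA : A \subset E :\ e by rewrite setSD.
have lA := conn_setD1_gt2 hfX' hY hfY.
rewrite ltnNge; apply/negP => hA2.
have lY1 : conn E r (e |: A) <= 3.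
  by apply: leq_trans (conn_setU1_le_minor hM heE del hA) _; rewrite addn1 ltnS.
have hY1 : e |: A \in Tg.
  apply: (tangle_cover hT _ (leq_ltn_trans lY1 order_gt3) hY hZ); by set_solve.
have hX'Y1 : X' \subset e |: A.
  by apply: subset_trans (subsetUr _ _); apply: subset_trans hfY; apply: subsetUr.
have hAZ : A \subset E :\: Z.
  have := leq_trans (card_meet_long_line hY1 hX'Y1 lY1) lY1.
  have -> : (e |: A) :&: Z = e |: (A :&: Z) by set_solve.
  rewrite cardsU1 inE setD11 add1n addn2 !ltnS leqn0 cards_eq0 setI_eq0 => hdis.
  by rewrite subsetD hdis andbT; apply: subset_trans hA (subsetDl _ _).
have := conn_minor_drop hM heE heZ sZ hAZ (leq_ltn_trans hA2 lA).
by rewrite ltnNge conn_le_minor.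
Qed.

Lemma long_line_closed_minor : mat_closed (E :\ e) rT' X'.
Proof.
move=> f hf hfX'; rewrite ltnNge; apply/negP => hle.
have hle2 := leq_trans hle minor_tangle_rank_le2.
have [Y' [hY' hfY' lY']] := tangle_rank_attained (leq_ltn_trans hle2 minor_order_gt2).
case/imsetP: hY' => Y; rewrite inE => /andP [hY _] hYe; subst Y'.
by have := minor_conn_setD1_gt2 hfX' hY hfY'; rewrite lY' ltnNge hle2.
Qed.

End LongLines.

Theorem lemma2p34 (T : finType) (E : {set T}) (r : {set T} -> nat)
  (theta : nat) (Tg : {set {set T}}) (X X' : {set T}) (e : T) (del : bool) :
  is_matroid E r ->
  three_connected E r ->
  is_tangle E r theta Tg ->
  long_line E (tangle_rank E r theta Tg) X ->
  long_line E (tangle_rank E r theta Tg) X' ->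
  tangle_rank E r theta Tg (X :|: X') = 4 ->
  e \in X ->
  three_connected (E :\ e) (minor_rank r e del) ->
  mat_closed (E :\ e) (tangle_rank (E :\ e) (minor_rank r e del) (theta - 1)
                     (inherited_tangle E r e del theta Tg)) X'.
Proof.
move=> hM h3 hT hX hX' hXX' heX h3'.
have [Z [hZ hXZ lZ]] := long_line_conn2 hX (ltnW (order_gt3 hXX')).
exact: (long_line_closed_minor hM h3 hT hX' hXX' hZ hXZ lZ hX heX h3').
Qed.
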